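(* Let $a<b$ and let $f,g:[a,b]\to\mathbb{R}$ be continuous and differentiable (from the right) at $a$. For $a<x\le b$ write $I_f(a,x)=\frac{1}{x-a}\int_a^x f(t)\,\mathrm{d}t$ and similarly $I_g(a,x)$. If $$\bigl[f(a)\,I_g(a,b)-g(a)\,I_f(a,b)\bigr]\cdot\bigl[f'(a)\,I_g(a,b)-g'(a)\,I_f(a,b)\bigr]> 0,$$ then there exists $\eta\in(a,b)$ such that $$I_g(a,b)\bigl(f(\eta)-I_f(a,\eta)\bigr)=I_f(a,b)\bigl(g(\eta)-I_g(a,\eta)\bigr).$$ *)

From Stdlib Require Import Reals.
From Coquelicot Require Import Coquelicot.
Open Scope R_scope.

Definition right_derivative (f : R -> R) (a l : R) : Prop :=
  filterlim (fun h => (f (a + h) - f a) / h) (at_right 0) (locally l).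

Definition Imean (f : R -> R) (a x : R) : R := RInt f a x / (x - a).

Definition continuous_on_Icc (f : R -> R) (a b : R) : Prop :=
  forall x, a <= x <= b ->
    filterlim f (within (fun y => a <= y <= b) (locally x)) (locally (f x)).

From Stdlib Require Import Reals Lra.
From Coquelicot Require Import Coquelicot.
Open Scope R_scope.

(* With h := I_g(a,b) f - I_f(a,b) g we have I_h(a,b) = 0, and the hypothesis says h(a) h'(a) > 0;
   after multiplying by h(a) we may assume u := h(a) h satisfies u'(a) > 0 and I_u(a,b) <= u(a).
   Then the mean x |-> I_u(a,x) starts above u(a) just to the right of a, because u grows
   there, and ends at most u(a) at b, so it has an interior maximum; its derivative
   (u(x) - I_u(a,x)) / (x - a) vanishes there, which is the claim for u and hence for h. *)

Lemma RInt_affine (a p k x : R) :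
  RInt (fun t => p + k * (t - a)) a x = p * (x - a) + k / 2 * (x - a) ^ 2.
Proof.
  set (F := fun t => p * t + k / 2 * (t - a) ^ 2).
  replace (p * (x - a) + k / 2 * (x - a) ^ 2) with (minus (F x) (F a))
    by (unfold F, minus, plus, opp; simpl; ring).
  apply is_RInt_unique, (is_RInt_derive (V := R_CompleteNormedModule)).
  - intros t _; unfold F; auto_derive; [easy | field].
  - intros t _; apply continuity_pt_filterlim; reg.
Qed.

Lemma Imean_affine (a p k x : R) :
  x <> a -> Imean (fun t => p + k * (t - a)) a x = p + k / 2 * (x - a).
Proof.
  intros hxa; unfold Imean; rewrite RInt_affine; field; lra.
Qed.

Lemma Imean_ext (u v : R -> R) (a x : R) :
  a <= x -> (forall t, a <= t <= x -> u t = v t) -> Imean u a x = Imean v a x.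
Proof.
  intros hax huv; unfold Imean; f_equal; apply RInt_ext.
  intros t; rewrite Rmin_left, Rmax_right by lra; intros; apply huv; lra.
Qed.

Lemma Imean_le (u v : R -> R) (a x : R) :
  a < x -> ex_RInt u a x -> ex_RInt v a x ->
  (forall t, a < t < x -> u t <= v t) -> Imean u a x <= Imean v a x.
Proof.
  intros hax hu hv huv; unfold Imean, Rdiv.
  apply Rmult_le_compat_r; [apply Rlt_le, Rinv_0_lt_compat; lra |].
  apply RInt_le; auto; lra.
Qed.

Lemma Imean_lincomb (u v : R -> R) (p q a x : R) :
  ex_RInt u a x -> ex_RInt v a x ->
  Imean (fun t => p * u t + q * v t) a x = p * Imean u a x + q * Imean v a x.
Proof.
  intros hu hv; unfold Imean.
  rewrite (RInt_plus (V := R_CompleteNormedModule) (fun t => p * u t) (fun t => q * v t)).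
  - rewrite (RInt_scal (V := R_CompleteNormedModule) u _ _ p),
            (RInt_scal (V := R_CompleteNormedModule) v _ _ q) by easy.
    unfold plus, scal; simpl; unfold mult; simpl; unfold Rdiv; ring.
  - exact (ex_RInt_scal (V := R_CompleteNormedModule) u a x p hu).
  - exact (ex_RInt_scal (V := R_CompleteNormedModule) v a x q hv).
Qed.

Lemma is_derive_Imean (u : R -> R) (a x : R) :
  (forall t, continuous u t) -> x <> a ->
  is_derive (Imean u a) x ((u x - Imean u a x) / (x - a)).
Proof.
  intros hu hxa.
  assert (hI : is_derive (fun y => RInt u a y) x (u x)).
  { apply (is_derive_RInt (V := R_NormedModule) u _ a x); [| apply hu].
    apply filter_forall; intros y.
    apply (RInt_correct (V := R_CompleteNormedModule)),
          (ex_RInt_continuous (V := R_CompleteNormedModule)); auto. }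
  assert (hd : is_derive (fun y => y - a) x 1) by (auto_derive; [easy | ring]).
  assert (H := is_derive_div _ _ x _ _ hI hd ltac:(lra)).
  unfold Imean; replace ((u x - RInt u a x / (x - a)) / (x - a))
    with ((u x * (x - a) - RInt u a x * 1) / (x - a) ^ 2) by (field; lra).
  exact H.
Qed.

Definition clamp (a b x : R) : R := Rmax a (Rmin b x).

Lemma clamp_in (a b x : R) : a <= b -> a <= clamp a b x <= b.
Proof. intros; unfold clamp, Rmax, Rmin; repeat destruct Rle_dec; lra. Qed.

Lemma clamp_id (a b x : R) : a <= x <= b -> clamp a b x = x.
Proof. intros; unfold clamp, Rmax, Rmin; repeat destruct Rle_dec; lra. Qed.

Lemma clamp_lipschitz (a b x y : R) : Rabs (clamp a b y - clamp a b x) <= Rabs (y - x).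
Proof.
  unfold clamp, Rmax, Rmin; repeat destruct Rle_dec; unfold Rabs; repeat destruct Rcase_abs; lra.
Qed.

Lemma continuous_on_Icc_clamp (f : R -> R) (a b : R) :
  a <= b -> continuous_on_Icc f a b -> forall x, continuous (fun t => f (clamp a b t)) x.
Proof.
  intros hab hf x.
  eapply filterlim_comp; [| apply (hf _ (clamp_in a b x hab))].
  intros P [eps hP]; exists eps; intros y hy.
  apply hP; [| apply clamp_in, hab].
  change (Rabs (clamp a b y - clamp a b x) < eps).
  eapply Rle_lt_trans; [apply clamp_lipschitz | exact hy].
Qed.

Lemma right_derivative_ext (f g : R -> R) (a l d : R) :
  0 < d -> (forall t, a <= t < a + d -> f t = g t) ->
  right_derivative f a l -> right_derivative g a l.
Proof.
  intros hd hfg; apply filterlim_ext_loc.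
  exists (mkposreal d hd); intros h hh hpos.
  change (Rabs (h - 0) < d) in hh; rewrite Rminus_0_r, Rabs_pos_eq in hh by lra.
  rewrite !hfg; lra.
Qed.

Lemma right_derivative_lincomb (f g : R -> R) (p q a df dg : R) :
  right_derivative f a df -> right_derivative g a dg ->
  right_derivative (fun t => p * f t + q * g t) a (p * df + q * dg).
Proof.
  intros hf hg.
  apply (filterlim_ext_loc
           (fun h => p * ((f (a + h) - f a) / h) + q * ((g (a + h) - g a) / h))).
  { exists (mkposreal 1 Rlt_0_1); intros h _ hpos; field; lra. }
  eapply (filterlim_comp_2 _ _ Rplus).
  - eapply filterlim_comp; [exact hf | exact (filterlim_scal_r (V := R_NormedModule) p df)].
  - eapply filterlim_comp; [exact hg | exact (filterlim_scal_r (V := R_NormedModule) q dg)].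
  - exact (filterlim_plus (V := R_NormedModule) (p * df) (q * dg)).
Qed.

Lemma right_derivative_affine_bounds (u : R -> R) (a e : R) :
  0 < e -> right_derivative u a e ->
  exists d, 0 < d /\ forall t, a < t < a + d ->
    u a + e / 2 * (t - a) <= u t <= u a + 3 * e / 2 * (t - a).
Proof.
  intros he hu.
  destruct (proj1 (filterlim_locally _ _) hu (mkposreal (e / 2) ltac:(lra))) as [d hd].
  exists d; split; [apply cond_pos |]; intros t ht.
  assert (hq : Rabs ((u (a + (t - a)) - u a) / (t - a) - e) < e / 2).
  { apply (hd (t - a)); [| lra].
    change (Rabs (t - a - 0) < d); rewrite Rminus_0_r, Rabs_pos_eq; lra. }
  replace (a + (t - a)) with t in hq by ring.
  apply Rabs_def2 in hq.
  assert (hslope : u t - u a = (u t - u a) / (t - a) * (t - a)) by (field; lra).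
  nra.
Qed.

Lemma exists_interior_critical_point (phi dphi : R -> R) (x1 x0 b : R) :
  x1 < x0 < b -> (forall x, x1 <= x <= b -> is_derive phi x (dphi x)) ->
  phi x1 < phi x0 -> phi b < phi x0 ->
  exists M, x1 < M < b /\ dphi M = 0.
Proof.
  intros hx hphi h1 hb.
  destruct (continuity_ab_maj phi x1 b) as [M [hmax hM]]; [lra | |].
  { intros c hc; apply continuity_pt_filterlim, (ex_derive_continuous (V := R_NormedModule)).
    eexists; apply hphi, hc. }
  assert (hM0 := hmax x0 ltac:(lra)).
  assert (M <> x1) by (intros ->; lra).
  assert (M <> b) by (intros ->; lra).
  assert (hMint : x1 < M < b) by lra.
  exists M; split; [exact hMint |].
  assert (hd := proj1 (is_derive_Reals _ _ _) (hphi M ltac:(lra))).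
  rewrite <- (deriv_maximum phi x1 b M (exist _ _ hd)); [reflexivity | lra | lra |].
  intros; apply hmax; lra.
Qed.

Lemma exists_eq_Imean (u : R -> R) (a b e : R) :
  a < b -> (forall x, continuous u x) -> 0 < e -> right_derivative u a e ->
  Imean u a b <= u a ->
  exists eta, a < eta < b /\ u eta = Imean u a eta.
Proof.
  intros hab hu he hder hb.
  destruct (right_derivative_affine_bounds u a e he hder) as [d0 [hd0 hbounds]].
  set (d := Rmin d0 (b - a)).
  assert (hd : 0 < d) by (apply Rmin_glb_lt; lra).
  assert (hdd0 : d <= d0) by apply Rmin_l.
  assert (hdb : d <= b - a) by apply Rmin_r.
  assert (ex_u : forall x, ex_RInt u a x)
    by (intros; apply (ex_RInt_continuous (V := R_CompleteNormedModule)); auto).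
  assert (ex_affine : forall p k x, ex_RInt (fun t => p + k * (t - a)) a x).
  { intros; apply (ex_RInt_continuous (V := R_CompleteNormedModule)).
    intros; apply continuity_pt_filterlim; reg. }
  assert (mean_lo : forall x, a < x <= a + d -> u a + e / 4 * (x - a) <= Imean u a x).
  { intros x hx; replace (e / 4) with (e / 2 / 2) by field.
    rewrite <- Imean_affine by lra.
    apply Imean_le; [lra | auto | auto | intros t ht; apply hbounds; lra]. }
  assert (mean_hi : forall x, a < x <= a + d -> Imean u a x <= u a + 3 * e / 4 * (x - a)).
  { intros x hx; replace (3 * e / 4) with (3 * e / 2 / 2) by field.
    rewrite <- Imean_affine by lra.
    apply Imean_le; [lra | auto | auto | intros t ht; apply hbounds; lra]. }
  (* The affine bounds make the mean larger at a + d/2 than at a + d/8, and larger than u(a). *)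
  destruct (exists_interior_critical_point (Imean u a)
              (fun x => (u x - Imean u a x) / (x - a)) (a + d / 8) (a + d / 2) b)
    as [M [hM hcrit]].
  - lra.
  - intros x hx; apply is_derive_Imean; auto; lra.
  - specialize (mean_lo (a + d / 2) ltac:(lra)); specialize (mean_hi (a + d / 8) ltac:(lra)).
    nra.
  - specialize (mean_lo (a + d / 2) ltac:(lra)); nra.
  - exists M; split; [lra |].
    assert (hcrit' : u M - Imean u a M = 0) by (field_simplify_eq in hcrit; lra).
    lra.
Qed.

Lemma exists_eq_Imean_combination (f g : R -> R) (a b df dg : R) :
  a < b -> (forall x, continuous f x) -> (forall x, continuous g x) ->
  right_derivative f a df -> right_derivative g a dg ->
  (f a * Imean g a b - g a * Imean f a b) * (df * Imean g a b - dg * Imean f a b) > 0 ->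
  exists eta, a < eta < b /\
    Imean g a b * (f eta - Imean f a eta) = Imean f a b * (g eta - Imean g a eta).
Proof.
  intros hab hf hg hdf hdg hpos.
  set (A := Imean f a b) in *; set (B := Imean g a b) in *.
  set (c := B * f a - A * g a).
  assert (hc : c <> 0).
  { intros hc0; replace (f a * B - g a * A) with c in hpos by (unfold c; ring).
    rewrite hc0 in hpos; lra. }
  set (u := fun t => (c * B) * f t + (- (c * A)) * g t).
  assert (mean_u : forall x, Imean u a x = (c * B) * Imean f a x + (- (c * A)) * Imean g a x)
    by (intros; apply Imean_lincomb;
        apply (ex_RInt_continuous (V := R_CompleteNormedModule)); auto).
  destruct (exists_eq_Imean u a b (c * (B * df - A * dg))) as [eta [heta heq]].
  - exact hab.
  - intros x; apply (continuous_plus (fun t => (c * B) * f t) (fun t => - (c * A) * g t)).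
    + apply (continuous_scal_r (c * B) f), hf.
    + apply (continuous_scal_r (- (c * A)) g), hg.
  - unfold c; nra.
  - replace (c * (B * df - A * dg)) with ((c * B) * df + (- (c * A)) * dg) by ring.
    apply right_derivative_lincomb; assumption.
  - rewrite mean_u; fold A B; unfold u.
    replace (c * B * f a + - (c * A) * g a) with (c * c) by (unfold c; ring).
    pose proof (Rle_0_sqr c); unfold Rsqr in *; lra.
  - exists eta; split; [exact heta |].
    rewrite mean_u in heq; unfold u in heq.
    apply (Rmult_eq_reg_l c); [lra | exact hc].
Qed.

Theorem mainTheorem12 (a b : R) (f g : R -> R) (df dg : R) :
  a < b ->
  continuous_on_Icc f a b ->
  continuous_on_Icc g a b ->
  right_derivative f a df ->
  right_derivative g a dg ->
  (f a * Imean g a b - g a * Imean f a b) * (df * Imean g a b - dg * Imean f a b) > 0 ->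
  exists eta, a < eta < b /\
    Imean g a b * (f eta - Imean f a eta) = Imean f a b * (g eta - Imean g a eta).
Proof.
  intros hab hf hg hdf hdg hpos.
  set (F := fun t => f (clamp a b t)); set (G := fun t => g (clamp a b t)).
  assert (F_eq : forall t, a <= t <= b -> F t = f t)
    by (intros; unfold F; rewrite clamp_id; auto).
  assert (G_eq : forall t, a <= t <= b -> G t = g t)
    by (intros; unfold G; rewrite clamp_id; auto).
  assert (mean_F : forall x, a <= x <= b -> Imean F a x = Imean f a x)
    by (intros; apply Imean_ext; [lra | intros; apply F_eq; lra]).
  assert (mean_G : forall x, a <= x <= b -> Imean G a x = Imean g a x)
    by (intros; apply Imean_ext; [lra | intros; apply G_eq; lra]).
  destruct (exists_eq_Imean_combination F G a b df dg) as [eta [heta heq]].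
  - exact hab.
  - apply continuous_on_Icc_clamp; [lra | exact hf].
  - apply continuous_on_Icc_clamp; [lra | exact hg].
  - apply (right_derivative_ext f F a df (b - a)); [lra | | exact hdf].
    intros; symmetry; apply F_eq; lra.
  - apply (right_derivative_ext g G a dg (b - a)); [lra | | exact hdg].
    intros; symmetry; apply G_eq; lra.
  - rewrite F_eq, G_eq, !mean_F, !mean_G by lra; exact hpos.
  - exists eta; split; [exact heta |].
    rewrite F_eq, G_eq, !mean_F, !mean_G in heq by lra; exact heq.
Qed.
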